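(* Let $(\Omega,\rho)$ be a metric space, $\beta\in(0,1]$, $A\subset\Omega$ finite with $|A|\ge2$, and $g:A\to[0,1]$ not constant. Let $F:\Omega\to[0,1]$ be the $\beta$-PMSE of $g$ from $A$. Let $E\subset\Omega$ satisfy $\mathrm{diam}(E)^\beta\le\frac12\min_{x\ne x'\in A}\rho(x,x')^\beta$. Then $\sup_{x,x'\in E}\frac{\Lambda^\beta_F(x)}{\Lambda^\beta_F(x')}\le2$.
   Context: $\Lambda_F^\beta(x):=\sup_{y\in\Omega\setminus\{x\}}\frac{|F(x)-F(y)|}{\rho(x,y)^\beta}$. For $x\in\Omega$ and $u,v\in A$ (excluding $u=v=x$), $R_x(u,v):=\frac{g(v)-g(u)}{\rho(x,v)^\beta+\rho(x,u)^\beta}$, $F_x(u,v):=g(u)+R_x(u,v)\rho(x,u)^\beta$, $R^*_x:=\max_{u,v\in A}R_x(u,v)$, $W_x(\epsilon):=\{(u,v)\in A\times A: R_x(u,v)>R_x^*-\epsilon\}$, $\Phi_x(\epsilon):=\{F_x(u,v):(u,v)\in W_x(\epsilon)\}$. The $\beta$-PMSE is $F(x):=\lim_{\epsilon\to0^+}\Phi_x(\epsilon)$, i.e. the unique $r$ with $\sup_{\phi\in\Phi_x(\epsilon)}|\phi-r|\to0$; when a unique maximizer $(u^*_x,v^*_x)$ of $R_x$ exists this equals $g(u^*_x)+\frac{\rho(x,u^*_x)^\beta}{\rho(x,u^*_x)^\beta+\rho(x,v^*_x)^\beta}(g(v^*_x)-g(u^*_x))$. *)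

From HB Require Import structures.
From mathcomp Require Import all_boot all_order all_algebra.
From mathcomp Require Import all_classical all_reals all_analysis.
Set Implicit Arguments. Unset Strict Implicit. Unset Printing Implicit Defensive.
Import Order.TTheory GRing.Theory Num.Theory.
Local Open Scope classical_set_scope.
Local Open Scope ring_scope.

Definition is_metric (R : realType) (T : Type) (rho : T -> T -> R) : Prop :=
  [/\ forall x y, 0 <= rho x y,
      forall x y, rho x y = 0 <-> x = y,
      forall x y, rho x y = rho y x &
      forall x y z, rho x z <= rho x y + rho y z].

Section PMSE.
Variables (R : realType) (T : Type) (rho : T -> T -> R) (beta : R).
Variables (A : set T) (g : T -> R).

Definition adm (x : T) (u v : T) : Prop := A u /\ A v /\ ~ (u = x /\ v = x).

Definition Rx (x u v : T) : R :=
  (g v - g u) / (rho x v `^ beta + rho x u `^ beta).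

Definition Fx (x u v : T) : R := g u + Rx x u v * rho x u `^ beta.

Definition Rstar (x : T) : R :=
  sup [set r | exists u v, adm x u v /\ r = Rx x u v].

Definition W (x : T) (eps : R) : set (T * T) :=
  [set p | adm x p.1 p.2 /\ Rx x p.1 p.2 > Rstar x - eps].

Definition Phi (x : T) (eps : R) : set R := [set Fx x p.1 p.2 | p in W x eps].

(* F(x) = lim_{eps -> 0+} Phi_x(eps): sup_{phi in Phi_x(eps)} |phi - F x| -> 0 *)
Definition is_PMSE (F : T -> R) : Prop :=
  forall x, forall e, 0 < e -> exists2 d, 0 < d &
    forall eps, 0 < eps -> eps < d ->
      forall phi, Phi x eps phi -> `|phi - F x| <= e.
End PMSE.

Local Open Scope ereal_scope.

Definition Lambda (R : realType) (T : Type) (rho : T -> T -> R) (beta : R)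
  (F : T -> R) (x : T) : \bar R :=
  ereal_sup [set ((`|F x - F y| / rho x y `^ beta)%R)%:E | y in [set y | y <> x]].

Definition diam (R : realType) (T : Type) (rho : T -> T -> R) (E : set T) : \bar R :=
  ereal_sup [set (rho p.1 p.2)%:E | p in E `*` E].

Definition minsep_pow (R : realType) (T : Type) (rho : T -> T -> R) (beta : R)
  (A : set T) : R :=
  inf [set (rho p.1 p.2 `^ beta)%R | p in [set p | A p.1 /\ A p.2 /\ p.1 <> p.2]].

From HB Require Import structures.
From mathcomp Require Import all_boot all_order all_algebra.
From mathcomp Require Import all_classical all_reals all_analysis.
From mathcomp Require Import lra.
Set Implicit Arguments. Unset Strict Implicit. Unset Printing Implicit Defensive.
Import Order.TTheory GRing.Theory Num.Theory.
Local Open Scope classical_set_scope.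
Local Open Scope ring_scope.

(* Since A is finite, the supremum R*_x is attained at some admissible pair
   (u, v), and the PMSE is F(x) = g(u) + R*_x rho(x,u)^b = g(v) - R*_x rho(x,v)^b,
   while maximality of R*_x gives g(w) - R*_x rho(x,w)^b <= F(x) <= g(w) +
   R*_x rho(x,w)^b for every w in A.  As rho^b is again a metric (b <= 1), these
   two cones show that |F(x) - F(y)| <= R*_x rho(x,y)^b with equality at y = u or
   y = v, i.e. Lambda_F(x) = R*_x.  For x, x' in E, the same pair (u,v) gives
   R*_x (rho(x,u)^b + rho(x,v)^b) = g(v) - g(u) <= R*_{x'} (rho(x',u)^b + rho(x',v)^b),
   and the diameter bound makes the right-hand sum at most twice the left one. *)

Lemma finite_has_sup (R : realType) (S : set R) :
  finite_set S -> S !=set0 -> has_sup S.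
Proof. by move=> fS S0; exact: compact_has_sup S0 (@finite_compact R^o S fS). Qed.

Lemma finite_sup_mem (R : realType) (S : set R) :
  finite_set S -> S !=set0 -> S (sup S).
Proof.
move=> fS S0; have clS := compact_closed (@Rhausdorff R) (@finite_compact R^o S fS).
rewrite {1}(@closure_id R^o S).1 //.
have [_ ubS] := finite_has_sup fS S0; exact: closure_sup S0 ubS.
Qed.

Lemma powR_subadd (R : realType) (beta a b : R) : 0 < beta <= 1 ->
  0 <= a -> 0 <= b -> (a + b) `^ beta <= a `^ beta + b `^ beta.
Proof.
move=> /andP[b0 b1] a0 b_ge0.
have [s0|s_neq0] := eqVneq (a + b) 0.
  have [-> ->] : a = 0 /\ b = 0 by split; lra.
  by rewrite addr0 powR0 ?gt_eqF// addr0.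
have s_gt0 : 0 < a + b by rewrite lt_def s_neq0 addr_ge0.
(* c^b >= (c/s) s^b for 0 <= c <= s = a + b, since (c/s)^b >= c/s; sum over c = a, b. *)
have chord c : 0 <= c <= a + b -> c / (a + b) * (a + b) `^ beta <= c `^ beta.
  move=> /andP[c0 cs].
  have -> : c `^ beta = (c / (a + b) * (a + b)) `^ beta by rewrite divfK ?gt_eqF.
  rewrite powRM ?divr_ge0 ?(ltW s_gt0) //; apply: ler_wpM2r; first exact: powR_ge0.
  have [->|c_neq0] := eqVneq c 0; first by rewrite mul0r powR_ge0.
  have c_gt0 : 0 < c by rewrite lt_def c_neq0.
  by apply: ger1_powR; rewrite // divr_gt0 //= ler_pdivrMr // mul1r.
have -> : (a + b) `^ beta =
    a / (a + b) * (a + b) `^ beta + b / (a + b) * (a + b) `^ beta.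
  by rewrite -mulrDl -mulrDl divff // mul1r.
by apply: lerD; apply: chord; apply/andP; split; lra.
Qed.

Section MetricPowers.
Variables (R : realType) (T : Type) (rho : T -> T -> R) (beta : R).
Hypotheses (rho_metric : is_metric rho) (beta_gt0 : 0 < beta) (beta_le1 : beta <= 1).

Lemma powR_rho_gt0 x y : x <> y -> 0 < rho x y `^ beta.
Proof.
case: rho_metric => rho_ge0 rho_eq0 _ _ xy; apply: powR_gt0.
by rewrite lt_def rho_ge0 andbT; apply/eqP => /rho_eq0.
Qed.

Lemma powR_rho_sym x y : rho x y `^ beta = rho y x `^ beta.
Proof. by case: rho_metric => _ _ -> _. Qed.

Lemma powR_rho_xx x : rho x x `^ beta = 0.
Proof.
by case: rho_metric => _ rho_eq0 _ _; rewrite (rho_eq0 x x).2 // powR0 ?gt_eqF.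
Qed.

Lemma powR_rho_triangle x y z :
  rho x z `^ beta <= rho x y `^ beta + rho y z `^ beta.
Proof.
case: rho_metric => rho_ge0 _ _ rho_tri.
have beta01 : 0 < beta <= 1 by rewrite beta_gt0 beta_le1.
apply: le_trans (powR_subadd beta01 (rho_ge0 x y) (rho_ge0 y z)).
by apply: ge0_ler_powR; rewrite ?nnegrE ?addr_ge0 ?(ltW beta_gt0) ?rho_tri.
Qed.

Lemma minsep_pow_le (A : set T) u v : A u -> A v -> u <> v ->
  minsep_pow rho beta A <= rho u v `^ beta.
Proof.
move=> Au Av uv; apply: ge_inf; last by exists (u, v).
by exists 0 => _ [p _ <-]; exact: powR_ge0.
Qed.

Lemma powR_rho_le_diam (E : set T) (c : R) x x' : E x -> E x' ->
  (poweR (diam rho E) beta <= c%:E)%E -> rho x x' `^ beta <= c.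
Proof.
move=> Ex Ex'; have rho_le : ((rho x x')%:E <= diam rho E)%E.
  by apply: ereal_sup_ubound; exists (x, x').
case: rho_metric => rho_ge0 _ _ _.
move: rho_le; case: (diam rho E) => [d| |] //=; last by rewrite gt_eqF.
rewrite !lee_fin => rho_le /(le_trans _); apply.
by apply: ge0_ler_powR; rewrite ?nnegrE ?(le_trans _ rho_le) ?(ltW beta_gt0).
Qed.

Section Cone.
Variables (A : set T) (h f r : T -> R).
Hypothesis r_ge0 : forall x, 0 <= r x.
Hypothesis cone_ub : forall x w, A w -> f x <= h w + r x * rho x w `^ beta.
Hypothesis cone_attained :
  forall x, exists2 w, A w & f x = h w + r x * rho x w `^ beta.

Lemma cone_sub x y : r x <= r y -> f x - f y <= r x * rho x y `^ beta.
Proof.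
move=> rxy; have [w Aw fy] := cone_attained y.
have := cone_ub x Aw; have := powR_rho_triangle x y w.
move=> /(ler_wpM2l (r_ge0 x)); rewrite mulrDr.
have : r x * rho y w `^ beta <= r y * rho y w `^ beta by rewrite ler_wpM2r ?powR_ge0.
lra.
Qed.

End Cone.

Section PMSE.
Variables (A : set T) (g : T -> R).
Hypotheses (finA : finite_set A) (A_two : exists a b, A a /\ A b /\ a <> b).

Let Rset x := [set r | exists u v, adm A x u v /\ r = Rx rho beta g x u v].

Lemma adm_neq x u v : A u -> A v -> u <> v -> adm A x u v.
Proof. by move=> Au Av uv; do 2!split=> //; move=> [ux vx]; apply: uv; rewrite ux vx. Qed.

Lemma adm_den_gt0 x u v : adm A x u v ->
  0 < rho x v `^ beta + rho x u `^ beta.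
Proof.
move=> [_ [_ not_xx]]; have ge0 := powR_ge0 (rho x _) beta.
have [ux|ux] := pselect (u = x).
  have xv : x <> v by move=> vx; apply: not_xx.
  by have := powR_rho_gt0 xv; have := ge0 u; lra.
have xu : x <> u by move=> xu; apply: ux.
by have := powR_rho_gt0 xu; have := ge0 v; lra.
Qed.

Let Rset_finite x : finite_set (Rset x).
Proof.
apply: (@sub_finite_set _ _ ((fun p => Rx rho beta g x p.1 p.2) @` (A `*` A))).
  by move=> _ [u [v [[Au [Av _]] ->]]]; exists (u, v).
exact/finite_image/finite_setX.
Qed.

Let Rset_neq0 x : Rset x !=set0.
Proof.
have [a [b [Aa [Ab ab]]]] := A_two.
by exists (Rx rho beta g x a b), a, b; split => //; exact: adm_neq.
Qed.

Lemma Rstar_attained x :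
  exists u v, adm A x u v /\ Rx rho beta g x u v = Rstar rho beta A g x.
Proof.
have [u [v [uv r_eq]]] := finite_sup_mem (Rset_finite x) (Rset_neq0 x).
by exists u, v; split=> //; exact: esym r_eq.
Qed.

Lemma Rx_le_Rstar x u v : adm A x u v ->
  Rx rho beta g x u v <= Rstar rho beta A g x.
Proof.
move=> uv; apply: ub_le_sup; last by exists u, v.
exact: (finite_has_sup (Rset_finite x) (Rset_neq0 x)).2.
Qed.

Lemma Rstar_ub x u v : adm A x u v ->
  g v - g u <= Rstar rho beta A g x * (rho x v `^ beta + rho x u `^ beta).
Proof. by move=> uv; rewrite -ler_pdivrMr ?adm_den_gt0 //; exact: Rx_le_Rstar. Qed.

(* R_x is antisymmetric on admissible pairs, so its maximum is nonnegative. *)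
Lemma Rstar_ge0 x : 0 <= Rstar rho beta A g x.
Proof.
have [a [b [Aa [Ab ab]]]] := A_two.
have := Rx_le_Rstar (adm_neq x Aa Ab ab).
have := Rx_le_Rstar (adm_neq x Ab Aa (nesym ab)).
have -> : Rx rho beta g x b a = - Rx rho beta g x a b.
  by rewrite /Rx -mulNr opprB (addrC (rho x a `^ beta)).
lra.
Qed.

Lemma Rstar_le_twice x x' : 2 * rho x x' `^ beta <= minsep_pow rho beta A ->
  Rstar rho beta A g x <= 2 * Rstar rho beta A g x'.
Proof.
move=> xx'_small; have [u [v [uv_adm r_eq]]] := Rstar_attained x.
set r := Rstar _ _ _ _ x in r_eq *; set r' := Rstar _ _ _ _ x'.
have r'_ge0 : 0 <= r' := Rstar_ge0 x'.
have [uv_eq|uv] := pselect (u = v).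
  by move: r_eq; rewrite uv_eq /Rx subrr mul0r => <-; rewrite mulr_ge0.
have uv_adm' : adm A x' u v by case: uv_adm => Au [Av _]; exact: adm_neq.
set S := rho x v `^ beta + rho x u `^ beta.
set D := rho x' v `^ beta + rho x' u `^ beta.
have S_gt0 : 0 < S := adm_den_gt0 uv_adm.
have rS : r * S = g v - g u by rewrite -r_eq /Rx divfK ?gt_eqF.
have D_le : D <= 2 * S.
  have := minsep_pow_le uv_adm.1 uv_adm.2.1 uv.
  have := powR_rho_triangle u x v; have := powR_rho_triangle x' x v.
  have := powR_rho_triangle x' x u; rewrite !(powR_rho_sym _ x) /D /S; lra.
have := Rstar_ub uv_adm'; rewrite -/D -/r' -rS => rS_le.
have rD_le : r' * D <= r' * (2 * S) by exact: ler_wpM2l.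
by rewrite -(ler_pM2r S_gt0); lra.
Qed.

Variable F : T -> R.
Hypothesis F_PMSE : is_PMSE rho beta A g F.

Lemma PMSE_argmax x u v : adm A x u v ->
  Rx rho beta g x u v = Rstar rho beta A g x -> F x = Fx rho beta g x u v.
Proof.
move=> uv r_eq; apply/eqP; rewrite eq_sym -subr_eq0 -normr_le0.
apply/ler_addgt0Pr => e e_gt0; rewrite add0r.
have [d d_gt0 close] := F_PMSE x e_gt0.
apply: (close (d / 2)); [lra | lra |].
by exists (u, v) => //; split => //=; rewrite r_eq; lra.
Qed.

Lemma PMSE_maximizer x : exists u v, adm A x u v /\
  F x = g u + Rstar rho beta A g x * rho x u `^ beta /\
  F x = g v - Rstar rho beta A g x * rho x v `^ beta.
Proof.
have [u [v [uv r_eq]]] := Rstar_attained x.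
have Fu := PMSE_argmax uv r_eq; rewrite /Fx r_eq in Fu.
have rS : Rstar rho beta A g x * (rho x v `^ beta + rho x u `^ beta) = g v - g u.
  by rewrite -r_eq /Rx divfK ?gt_eqF ?adm_den_gt0.
by exists u, v; split => //; split => //; move: rS; rewrite mulrDr; lra.
Qed.

Lemma PMSE_ub x w : A w -> F x <= g w + Rstar rho beta A g x * rho x w `^ beta.
Proof.
move=> Aw; have [_ [v [[_ [Av _]] [_ Fv]]]] := PMSE_maximizer x.
have [wv_adm|not_adm] := pselect (adm A x w v).
  by have := Rstar_ub wv_adm; rewrite mulrDr; lra.
have -> : w = v by move: not_adm => /not_andP[//|/not_andP[//|/contrapT[-> ->]]].
by have := mulr_ge0 (Rstar_ge0 x) (powR_ge0 (rho x v) beta); lra.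
Qed.

Lemma PMSE_lb x w : A w -> g w - Rstar rho beta A g x * rho x w `^ beta <= F x.
Proof.
move=> Aw; have [u [_ [[Au _] [Fu _]]]] := PMSE_maximizer x.
have [uw_adm|not_adm] := pselect (adm A x u w).
  by have := Rstar_ub uw_adm; rewrite mulrDr; lra.
have -> : w = u by move: not_adm => /not_andP[//|/not_andP[//|/contrapT[-> ->]]].
by have := mulr_ge0 (Rstar_ge0 x) (powR_ge0 (rho x u) beta); lra.
Qed.

Lemma PMSE_on_A y : A y -> F y = g y.
Proof.
move=> Ay; have := PMSE_ub y Ay; have := PMSE_lb y Ay.
by rewrite powR_rho_xx mulr0 subr0 addr0; lra.
Qed.

(* F x = min_(w in A) (g w + R*_x rho(x,w)^b), and likewise -F for -g. *)
Let F_cone x y : Rstar rho beta A g x <= Rstar rho beta A g y ->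
  F x - F y <= Rstar rho beta A g x * rho x y `^ beta.
Proof.
apply: (cone_sub (A := A) (h := g)) => [z|z w /PMSE_ub //|z].
  exact: Rstar_ge0.
by have [u [_ [[Au _] [Fu _]]]] := PMSE_maximizer z; exists u.
Qed.

Let negF_cone x y : Rstar rho beta A g x <= Rstar rho beta A g y ->
  F y - F x <= Rstar rho beta A g x * rho x y `^ beta.
Proof.
have -> : F y - F x = (- F x) - (- F y) by rewrite opprK addrC.
apply: (cone_sub (A := A) (h := fun w => - g w) (f := fun z => - F z)).
- exact: Rstar_ge0.
- by move=> z w /PMSE_lb lb /=; have := lb z; lra.
move=> z /=; have [_ [v [[_ [Av _]] [_ Fv]]]] := PMSE_maximizer z.
by exists v => //; rewrite Fv; lra.
Qed.

Lemma PMSE_holder x y :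
  `|F x - F y| <= Rstar rho beta A g x * rho x y `^ beta.
Proof.
rewrite ler_norml.
have [rxy|/ltW ryx] := leP (Rstar rho beta A g x) (Rstar rho beta A g y).
  by have := F_cone rxy; have := negF_cone rxy; lra.
have : Rstar rho beta A g y * rho y x `^ beta <= Rstar rho beta A g x * rho x y `^ beta.
  by rewrite powR_rho_sym ler_wpM2r ?powR_ge0.
by have := F_cone ryx; have := negF_cone ryx; lra.
Qed.

Lemma Lambda_PMSE x : Lambda rho beta F x = (Rstar rho beta A g x)%:E.
Proof.
apply/eqP; rewrite eq_le; apply/andP; split.
  apply: ge_ereal_sup => _ [y yx <-]; rewrite lee_fin.
  have xy : x <> y by move=> /esym.
  by rewrite ler_pdivrMr ?powR_rho_gt0 //; exact: PMSE_holder.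
have attained y : A y -> y <> x ->
    `|F x - g y| = Rstar rho beta A g x * rho x y `^ beta ->
    ((Rstar rho beta A g x)%:E <= Lambda rho beta F x)%E.
  move=> Ay yx F_eq; apply: ereal_sup_ubound; exists y => //.
  have xy : x <> y by move=> /esym.
  by rewrite (PMSE_on_A Ay) F_eq mulfK ?gt_eqF ?powR_rho_gt0.
have r_ge0 := Rstar_ge0 x.
have [u [v [[Au [Av nxx]] [Fu Fv]]]] := PMSE_maximizer x.
have [ux|ux] := pselect (u = x).
  apply: (attained v) => [//|vx|]; first exact: nxx.
  by rewrite Fv addrAC subrr add0r normrN ger0_norm ?mulr_ge0 ?powR_ge0.
by apply: (attained u) => //; rewrite Fu addrAC subrr add0r ger0_norm ?mulr_ge0 ?powR_ge0.
Qed.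

End PMSE.
End MetricPowers.

Theorem mainTheorem12 (R : realType) (T : Type) (rho : T -> T -> R) (beta : R)
  (A : set T) (g : T -> R) (F : T -> R) (E : set T) :
  is_metric rho ->
  0 < beta <= 1 ->
  finite_set A ->
  (exists a b, A a /\ A b /\ a <> b) ->
  (forall a, A a -> 0 <= g a <= 1) ->
  (exists a b, A a /\ A b /\ g a <> g b) ->
  is_PMSE rho beta A g F ->
  (poweR (diam rho E) beta <= (2^-1 * minsep_pow rho beta A)%:E)%E ->
  forall x x', E x -> E x' ->
    (Lambda rho beta F x <= 2%:E * Lambda rho beta F x')%E.
Proof.
move=> rho_metric /andP[b_gt0 b_le1] finA A_two _ _ F_PMSE diam_small x x' Ex Ex'.
rewrite !(Lambda_PMSE rho_metric b_gt0 b_le1 finA A_two F_PMSE) -EFinM lee_fin.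
apply: (Rstar_le_twice rho_metric b_gt0 b_le1 g finA A_two).
have := powR_rho_le_diam rho_metric b_gt0 Ex Ex' diam_small; lra.
Qed.
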